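(* Let $0<m<L$, $\kappa=L/m$, $\delta\in(0,1)$, and suppose \[ \max(\alpha_-,0)<\alpha\le\frac{2}{(1+\delta)L+(1-\delta)m},\qquad \alpha_-:=\frac{1}{1-\delta}\left(\frac{2}{L+m}-\frac{\delta}{m}\right). \] Set $\rho_\star=1-\alpha m(1-\delta)$ and \[ \gamma_\star=\frac{\rho_\star\big(\kappa-1+(\kappa+1)(\delta-\rho_\star)\big)}{(\kappa-(1-\delta))\,\delta}. \] Then $0<\gamma_\star<\rho_\star^2$. *)

From Stdlib Require Import Reals.
Open Scope R_scope.

Definition alpha_minus (m L delta : R) : R :=
  (1 / (1 - delta)) * (2 / (L + m) - delta / m).

Definition rho_star (m alpha delta : R) : R := 1 - alpha * m * (1 - delta).

Definition gamma_star (m L alpha delta : R) : R :=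
  let kappa := L / m in
  let rho := rho_star m alpha delta in
  rho * (kappa - 1 + (kappa + 1) * (delta - rho)) / ((kappa - (1 - delta)) * delta).

(* In the variables [k = L/m] and [y = alpha m (1 - delta)], so that [rho_star = 1 - y],
   the numerator of [gamma_star] is [(k+1)(delta+y) - 2], which is positive exactly when
   [alpha > alpha_-], and [gamma_star < rho_star^2] reduces to
   [y ((1+delta)k + (1-delta) + delta^2) < 2(1-delta) + delta^2].  This is the upper bound
   on [alpha], i.e. [y ((1+delta)k + (1-delta)) <= 2(1-delta)], plus [y delta^2 < delta^2];
   the latter holds because the upper bound on [alpha] also forces [y < 1]. *)

From Stdlib Require Import Reals Lra Psatz.
Open Scope R_scope.

Lemma mult_div_pos_lt_sqr (r n q : R) :
  0 < r -> 0 < n -> 0 < q -> n < r * q -> 0 < r * n / q /\ r * n / q < r ^ 2.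
Proof.
  intros Hr Hn Hq Hnq.
  split; [apply Rdiv_lt_0_compat; nra |].
  replace (r ^ 2) with (r * (r * q) / q) by (field; lra).
  apply Rmult_lt_compat_r; [apply Rinv_0_lt_compat |]; nra.
Qed.

Lemma normalized_rho_pos (k d y : R) :
  1 < k -> 0 < d -> y * ((1 + d) * k + (1 - d)) <= 2 * (1 - d) -> 0 < 1 - y.
Proof.
  intros Hk Hd0 Hy_upper.
  assert (HA : 2 * (1 - d) < (1 + d) * k + (1 - d)) by nra.
  assert (HA0 : 0 < (1 + d) * k + (1 - d)) by nra.
  destruct (Rlt_or_le y 1) as [Hy | Hy]; [lra | nra].
Qed.

Lemma normalized_numerator_pos (k d y : R) :
  2 < (k + 1) * (d + y) -> 0 < k - 1 + (k + 1) * (d - (1 - y)).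
Proof.
  intros Hy_lower.
  replace (k - 1 + (k + 1) * (d - (1 - y))) with ((k + 1) * (d + y) - 2) by ring.
  lra.
Qed.

Lemma normalized_denominator_pos (k d : R) : 1 < k -> 0 < d -> 0 < (k - (1 - d)) * d.
Proof. intros Hk Hd0; nra. Qed.

Lemma normalized_numerator_lt (k d y : R) :
  1 < k -> 0 < d -> y * ((1 + d) * k + (1 - d)) <= 2 * (1 - d) ->
  k - 1 + (k + 1) * (d - (1 - y)) < (1 - y) * ((k - (1 - d)) * d).
Proof.
  intros Hk Hd0 Hy_upper.
  assert (Hyd : y * (d * d) < 1 * (d * d)).
  { pose proof (normalized_rho_pos k d y Hk Hd0 Hy_upper).
    apply Rmult_lt_compat_r; nra. }
  assert (Hgap : (1 - y) * ((k - (1 - d)) * d) - (k - 1 + (k + 1) * (d - (1 - y)))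
                 = (2 * (1 - d) - y * ((1 + d) * k + (1 - d))) + (d * d - y * (d * d)))
    by ring.
  lra.
Qed.

Lemma alpha_le_upper_normalized (m L delta alpha : R) :
  0 < m -> m < L -> 0 < delta -> delta < 1 ->
  alpha <= 2 / ((1 + delta) * L + (1 - delta) * m) ->
  alpha * m * (1 - delta) * ((1 + delta) * (L / m) + (1 - delta)) <= 2 * (1 - delta).
Proof.
  intros Hm HmL Hd0 Hd1 Halpha.
  assert (HD : 0 < (1 + delta) * L + (1 - delta) * m) by nra.
  replace (alpha * m * (1 - delta) * ((1 + delta) * (L / m) + (1 - delta)))
    with ((1 - delta) * (alpha * ((1 + delta) * L + (1 - delta) * m))) by (field; lra).
  assert (HalphaD : alpha * ((1 + delta) * L + (1 - delta) * m) <= 2).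
  { replace 2 with (2 / ((1 + delta) * L + (1 - delta) * m) * ((1 + delta) * L + (1 - delta) * m))
      by (field; lra).
    apply Rmult_le_compat_r; lra. }
  nra.
Qed.

Lemma alpha_minus_lt_normalized (m L delta alpha : R) :
  0 < m -> m < L -> delta < 1 ->
  alpha_minus m L delta < alpha -> 2 < (L / m + 1) * (delta + alpha * m * (1 - delta)).
Proof.
  unfold alpha_minus; intros Hm HmL Hd1 Halpha.
  assert (Hscaled : 2 / (L + m) - delta / m < alpha * (1 - delta)).
  { replace (2 / (L + m) - delta / m)
      with ((1 - delta) * (1 / (1 - delta) * (2 / (L + m) - delta / m))) by (field; lra).
    rewrite (Rmult_comm alpha); apply Rmult_lt_compat_l; lra. }
  apply (Rmult_lt_compat_l (L + m)) in Hscaled; [| lra].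
  replace ((L + m) * (2 / (L + m) - delta / m)) with (2 - delta * (L / m + 1))
    in Hscaled by (field; lra).
  replace ((L / m + 1) * (delta + alpha * m * (1 - delta)))
    with ((L + m) * (alpha * (1 - delta)) + delta * (L / m + 1)) by (field; lra).
  lra.
Qed.

Theorem lemma3p3 (m L delta alpha : R) :
  0 < m -> m < L ->
  0 < delta -> delta < 1 ->
  Rmax (alpha_minus m L delta) 0 < alpha ->
  alpha <= 2 / ((1 + delta) * L + (1 - delta) * m) ->
  0 < gamma_star m L alpha delta /\
  gamma_star m L alpha delta < (rho_star m alpha delta) ^ 2.
Proof.
  intros Hm HmL Hd0 Hd1 [Hlower _]%Rmax_Rlt Hupper.
  assert (Hk : 1 < L / m) by (apply Rmult_lt_reg_r with m; [| field_simplify]; lra).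
  pose proof (alpha_le_upper_normalized _ _ _ _ Hm HmL Hd0 Hd1 Hupper) as Hy_upper.
  pose proof (alpha_minus_lt_normalized _ _ _ _ Hm HmL Hd1 Hlower) as Hy_lower.
  apply mult_div_pos_lt_sqr.
  - exact (normalized_rho_pos _ _ _ Hk Hd0 Hy_upper).
  - exact (normalized_numerator_pos _ _ _ Hy_lower).
  - exact (normalized_denominator_pos _ _ Hk Hd0).
  - exact (normalized_numerator_lt _ _ _ Hk Hd0 Hy_upper).
Qed.
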